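(* Let $R$ be a unital associative ring and $$A=\begin{pmatrix}1&1&1\\1&a&b\\1&c&d\end{pmatrix}\in\widehat{\cal S},\qquad \Phi(A)=\begin{pmatrix}1&1&1\\1&a'&b'\\1&c'&d'\end{pmatrix}.$$ Then $$a'=(d-1)^{-1}(d-c)a^{-1}(db^{-1}-ca^{-1})^{-1}(db^{-1}-1),\quad b'=(c-1)^{-1}(d-c)b^{-1}(db^{-1}-ca^{-1})^{-1}(ca^{-1}-1),$$ $$c'=(b-1)^{-1}(b-a)a^{-1}(db^{-1}-ca^{-1})^{-1}(db^{-1}-1),\quad d'=(a-1)^{-1}(b-a)b^{-1}(db^{-1}-ca^{-1})^{-1}(ca^{-1}-1).$$
   Context: $R^*$: units of $R$. $M_3^*(R)$: invertible $3\times3$ matrices; $M_3^\star(R)$: matrices with all entries in $R^*$. $J_1(M)=M^{-1}$; $J_2(M)_{jk}=(M_{kj})^{-1}$; $J=J_2\circ J_1$. $\widehat M_3(R)$: matrices whose first row and column consist of $1$'s. For $A=\{a_{j,k}\}\in M_3^\star(R)$: $\Lambda^L(A)_{j,k}=a_{1,1}a_{j,1}^{-1}a_{j,k}a_{1,k}^{-1}$. $\Phi(A)=J_2(\Lambda^L(A^{-1}))$. ${\cal S}=\{M\in M_3(R):$ all square submatrices of $M$ are invertible and $J_2(M)$ is invertible$\}$, $\widehat{\cal S}={\cal S}\cap\widehat M_3(R)$. *)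

From HB Require Import structures.
From mathcomp Require Import all_boot all_order all_algebra.
From Stdlib Require Import ClassicalEpsilon.
Set Implicit Arguments. Unset Strict Implicit. Unset Printing Implicit Defensive.
Import GRing.Theory.
Local Open Scope ring_scope.

Section Defs.
Variable R : unitRingType.

Definition mx_invertible (k : nat) (M : 'M[R]_k) : Prop :=
  exists N : 'M[R]_k, M *m N = 1%:M /\ N *m M = 1%:M.

(* the inverse matrix A^{-1} (chosen; it is unique when A is invertible) *)
Definition minv (A : 'M[R]_3) : 'M[R]_3 :=
  epsilon (inhabits A) (fun B => A *m B = 1%:M /\ B *m A = 1%:M).

Definition all_units (M : 'M[R]_3) : Prop := forall i j, M i j \is a GRing.unit.

Definition J2 (M : 'M[R]_3) : 'M[R]_3 := \matrix_(j, k) (M k j)^-1.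

Definition LambdaL (A : 'M[R]_3) : 'M[R]_3 :=
  \matrix_(j, k) (A ord0 ord0 * (A j ord0)^-1 * A j k * (A ord0 k)^-1).

Definition Phi (A : 'M[R]_3) : 'M[R]_3 := J2 (LambdaL (minv A)).

Definition all_sq_submx_invertible (M : 'M[R]_3) : Prop :=
  forall (k : nat) (f g : 'I_k -> 'I_3), injective f -> injective g ->
    mx_invertible (mxsub f g M).

Definition inS (M : 'M[R]_3) : Prop :=
  all_sq_submx_invertible M /\ mx_invertible (J2 M).

Definition inMhat (M : 'M[R]_3) : Prop :=
  (forall j, M ord0 j = 1) /\ (forall j, M j ord0 = 1).

Definition inShat (M : 'M[R]_3) : Prop := inS M /\ inMhat M.

End Defs.

Definition i0 : 'I_3 := @Ordinal 3 0 isT.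
Definition i1 : 'I_3 := @Ordinal 3 1 isT.
Definition i2 : 'I_3 := @Ordinal 3 2 isT.

(* the matrix ((1,1,1),(1,a,b),(1,c,d)) *)
Definition hatmx (R : unitRingType) (a b c d : R) : 'M[R]_3 :=
  \matrix_(i, j) (if (i == i0) || (j == i0) then 1
                  else if i == i1 then (if j == i1 then a else b)
                  else (if j == i1 then c else d)).

From HB Require Import structures.
From mathcomp Require Import all_boot all_order all_algebra perm.
From Stdlib Require Import ClassicalEpsilon.
Set Implicit Arguments. Unset Strict Implicit. Unset Printing Implicit Defensive.
Import GRing.Theory.
Local Open Scope ring_scope.

(* Let B = A^-1.  Unfolding the definitions, Phi(A)_jk = B_0j B_kj^-1 B_k0 B_00^-1
   as soon as every entry of B is a unit; this holds because, after permuting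
   rows and columns, B_jk is the inverse of the Schur complement of an invertible
   2x2 submatrix of A.  The two ratios B_0j / B_kj and B_k0 / B_00 are then read off
   from the off-diagonal equations of A B = 1, two-term linear systems whose
   pivots a, b, a - 1, ..., d - 1 and d b^-1 - c a^-1 are units since they are
   entries or 2x2 Schur complements of A. *)

Section Submatrices.
Variable R : pzRingType.

Lemma schur_complement_inverse (m n : nat) (A B : 'M[R]_(m + n)) (P' : 'M[R]_m) :
  A *m B = 1%:M -> B *m A = 1%:M ->
  ulsubmx A *m P' = 1%:M -> P' *m ulsubmx A = 1%:M ->
  let S := drsubmx A - dlsubmx A *m P' *m ursubmx A in
  S *m drsubmx B = 1%:M /\ drsubmx B *m S = 1%:M.
Proof.
move=> AB BA PP' P'P S.
move: AB BA; rewrite -[A]submxK -[B]submxK !mulmx_block scalar_mx_block !submxK.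
move=> /eq_block_mx[_ AB12 _ AB22] /eq_block_mx[_ _ BA21 BA22].
have AB12' : ursubmx A *m drsubmx B = - (ulsubmx A *m ursubmx B).
  by apply/eqP; rewrite -addr_eq0 addrC AB12.
have BA21' : drsubmx B *m dlsubmx A = - (dlsubmx B *m ulsubmx A).
  by apply/eqP; rewrite -addr_eq0 addrC BA21.
rewrite /S mulmxBl mulmxBr; split.
- by rewrite -!mulmxA AB12' mulmxN !mulmxA P'P mul1mx mulmxN opprK addrC AB22.
- by rewrite !mulmxA BA21' !mulNmx -(mulmxA _ _ P') PP' mulmx1 opprK addrC BA22.
Qed.

Lemma mulmx_mxsub_perm (m n p m' p' : nat) (f : 'I_m' -> 'I_m) (s : {perm 'I_n})
    (h : 'I_p' -> 'I_p) (A : 'M[R]_(m, n)) (B : 'M[R]_(n, p)) :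
  mxsub f s A *m mxsub s h B = mxsub f h (A *m B).
Proof.
apply/matrixP => i j; rewrite !mxE [RHS](reindex_inj (@perm_inj _ s)).
by apply: eq_bigr => l _; rewrite !mxE.
Qed.

Lemma mxsub1 (n n' : nat) (f : 'I_n' -> 'I_n) :
  injective f -> mxsub f f (1%:M : 'M[R]_n) = 1%:M.
Proof. by move=> f_inj; apply/matrixP => i j; rewrite !mxE (inj_eq f_inj). Qed.

End Submatrices.

Section InverseEntries.
Variable R : unitRingType.

Lemma mx11_unit (M N : 'M[R]_1) : M *m N = 1%:M -> N *m M = 1%:M -> M 0 0 \is a GRing.unit.
Proof.
move=> /(congr1 (fun X : 'M_1 => X 0 0)) MN /(congr1 (fun X : 'M_1 => X 0 0)) NM.
by apply/unitrP; exists (N 0 0); move: MN NM; rewrite !mxE !big_ord1.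
Qed.

Lemma minv_spec (A : 'M[R]_3) : mx_invertible A -> A *m minv A = 1%:M /\ minv A *m A = 1%:M.
Proof. exact: (epsilon_spec (inhabits A) (fun B => A *m B = 1%:M /\ B *m A = 1%:M)). Qed.

Lemma sq_submx_invertible_entry_unit (M : 'M[R]_3) i j :
  all_sq_submx_invertible M -> M i j \is a GRing.unit.
Proof.
move=> M_sub; have const_inj (k : 'I_3) : injective (fun _ : 'I_1 => k).
  by move=> x y _; rewrite (ord1 x) (ord1 y).
have [N [MN NM]] := M_sub 1%N _ _ (const_inj i) (const_inj j).
by have := mx11_unit MN NM; rewrite mxE.
Qed.

Lemma sq_submx_invertible_mx (M : 'M[R]_3) :
  all_sq_submx_invertible M -> mx_invertible M.
Proof. by move=> M_sub; have := M_sub 3%N id id (@inj_id _) (@inj_id _); rewrite mxsub_id. Qed.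

Lemma inverse_entry_unit (A B : 'M[R]_3) j k :
  all_sq_submx_invertible A -> A *m B = 1%:M -> B *m A = 1%:M ->
  B j k \is a GRing.unit.
Proof.
move=> A_sub AB BA.
(* Move entry (k, j) of A and entry (j, k) of B to the bottom-right corner. *)
pose s := tperm k i2; pose t := tperm j i2.
pose A' : 'M_(2 + 1) := mxsub s t A; pose B' : 'M_(2 + 1) := mxsub t s B.
have A'B' : A' *m B' = 1%:M by rewrite mulmx_mxsub_perm AB mxsub1 //; apply: perm_inj.
have B'A' : B' *m A' = 1%:M by rewrite mulmx_mxsub_perm BA mxsub1 //; apply: perm_inj.
have [P' [PP' P'P]] : mx_invertible (ulsubmx A').
  rewrite ulsubmxEsub -mxsub_comp; apply: A_sub; apply: inj_comp;
    by [apply: perm_inj | apply: lshift_inj].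
have [S_B' B'_S] := schur_complement_inverse A'B' B'A' PP' P'P.
have -> : B j k = drsubmx B' 0 0.
  by rewrite !mxE (_ : rshift 2 0 = i2) ?tpermR //; apply: val_inj.
exact: mx11_unit B'_S S_B'.
Qed.

Definition ord_pair (u v : 'I_3) (i : 'I_2) : 'I_3 := if val i == 0%N then u else v.

Lemma ord_pair_inj u v : u != v -> injective (ord_pair u v).
Proof.
move=> uv [[|[|i]] ?] [[|[|j]] ?] //; rewrite /ord_pair /= => E;
  by [apply: val_inj | rewrite E eqxx in uv].
Qed.

Lemma sq_submx_invertible_schur_unit (M : 'M[R]_3) u v u' v' :
  all_sq_submx_invertible M -> u != v -> u' != v' ->
  M v v' - M v u' * (M u u')^-1 * M u v' \is a GRing.unit.
Proof.
move=> M_sub uv uv'.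
pose M2 : 'M_(1 + 1) := mxsub (ord_pair u v) (ord_pair u' v') M.
have [N [M2N NM2]] := M_sub 2%N _ _ (ord_pair_inj uv) (ord_pair_inj uv').
have Uuu' := sq_submx_invertible_entry_unit u u' M_sub.
have PP' : ulsubmx M2 *m ((M u u')^-1)%:M = 1%:M.
  by apply/matrixP => i j; rewrite (ord1 i) (ord1 j) !mxE big_ord1 !mxE /= mulrV.
have P'P : ((M u u')^-1)%:M *m ulsubmx M2 = 1%:M.
  by apply/matrixP => i j; rewrite (ord1 i) (ord1 j) !mxE big_ord1 !mxE /= mulVr.
have [S_N N_S] := schur_complement_inverse (m := 1) (n := 1) M2N NM2 PP' P'P.
by have := mx11_unit S_N N_S; rewrite !(mxE, big_ord1) /ord_pair /= mulr1n.
Qed.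

End InverseEntries.

Section LinearElimination.
Variable R : unitRingType.

Lemma sum3_eq0_elim (x0 x1 x2 p q : R) : q - 1 \is a GRing.unit ->
  x0 + x1 + x2 = 0 -> x0 + p * x1 + q * x2 = 0 -> x0 = (q - 1)^-1 * (p - q) * x1.
Proof.
move=> Uq e1 e2.
have x2E : x2 = - (x0 + x1) by apply/eqP; rewrite -addr_eq0 addrC e1.
have qx0E : q * x0 = x0 + (p - q) * x1.
  move/eqP: e2; rewrite x2E mulrN mulrDr subr_eq0 => /eqP e2.
  by rewrite mulrBl addrA e2 addrK.
rewrite -mulrA -[x0](mulKr Uq); congr (_ * _).
by rewrite mulrBl mul1r qx0E addrC addKr.
Qed.

Lemma lin3_eq0_elim (x y z p q s t : R) :
  p \is a GRing.unit -> q \is a GRing.unit -> s / p - t / q \is a GRing.unit ->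
  x + p * y + q * z = 0 -> x + s * y + t * z = 0 ->
  y = p^-1 * (s / p - t / q)^-1 * (t / q - 1) * x.
Proof.
move=> Up Uq UW e1 e2.
have pyE : p * y = - (x + q * z) by apply/eqP; rewrite -addr_eq0 addrCA addrA e1.
have syE : s * y = - (x + t * z) by apply/eqP; rewrite -addr_eq0 addrCA addrA e2.
rewrite -!mulrA -[y](mulKr Up) -[p * y](mulKr UW); congr (_ * (_ * _)).
rewrite mulrBl -(mulrA s) mulKr // syE -(mulrA t) pyE mulrN mulrDr mulKr //.
by rewrite mulrN opprK mulrDr opprD addrACA addNr addr0 mulrBl mul1r addrC mulrA.
Qed.

End LinearElimination.

Section HatMatrices.
Variable R : unitRingType.
Implicit Types a b c d : R.

Lemma J2_LambdaL_entry (B : 'M[R]_3) j k :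
  (forall j k, B j k \is a GRing.unit) ->
  J2 (LambdaL B) j k = B i0 j / B k j * (B k i0 / B i0 i0).
Proof.
move=> B_unit; have -> : i0 = ord0 by apply: val_inj.
by rewrite !mxE !invrM ?unitrMr ?unitrV // !invrK !mulrA.
Qed.

Lemma mulmx3E (A B : 'M[R]_3) i j :
  (A *m B) i j = A i i0 * B i0 j + A i i1 * B i1 j + A i i2 * B i2 j.
Proof.
rewrite mxE !big_ord_recr big_ord0 /= add0r.
by congr (_ * _ + _ * _ + _ * _); congr (_ _ _); apply: val_inj.
Qed.

Lemma hatmx_mulmx a b c d (B : 'M[R]_3) j :
  [/\ (hatmx a b c d *m B) i0 j = B i0 j + B i1 j + B i2 j,
      (hatmx a b c d *m B) i1 j = B i0 j + a * B i1 j + b * B i2 j &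
      (hatmx a b c d *m B) i2 j = B i0 j + c * B i1 j + d * B i2 j].
Proof. by rewrite !mulmx3E !mxE /= !mul1r. Qed.

Lemma hatmx_mulmx_offdiag a b c d (B : 'M[R]_3) :
  hatmx a b c d *m B = 1%:M ->
  [/\ forall j, j != i0 -> B i0 j + B i1 j + B i2 j = 0,
      forall j, j != i1 -> B i0 j + a * B i1 j + b * B i2 j = 0 &
      forall j, j != i2 -> B i0 j + c * B i1 j + d * B i2 j = 0].
Proof.
move=> AB; split=> j; have [e0 e1 e2] := hatmx_mulmx a b c d B j;
  by rewrite -?e0 -?e1 -?e2 AB mxE eq_sym => /negbTE->.
Qed.

Lemma hatmx_subr1_units a b c d : all_sq_submx_invertible (hatmx a b c d) ->
  [/\ a - 1 \is a GRing.unit, b - 1 \is a GRing.unit,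
      c - 1 \is a GRing.unit & d - 1 \is a GRing.unit].
Proof.
move=> A_sub; have schur_unit u' v' v := @sq_submx_invertible_schur_unit _ _ i0 v u' v' A_sub.
split; [have := schur_unit i0 i1 i1 isT isT | have := schur_unit i0 i2 i1 isT isT
      | have := schur_unit i0 i1 i2 isT isT | have := schur_unit i0 i2 i2 isT isT];
  by rewrite !mxE /= invr1 !mulr1.
Qed.

Lemma hatmx_drblock_units a b c d : all_sq_submx_invertible (hatmx a b c d) ->
  [/\ a \is a GRing.unit, b \is a GRing.unit & d / b - c / a \is a GRing.unit].
Proof.
move=> A_sub; have entry_unit i j := sq_submx_invertible_entry_unit i j A_sub.
have Ub : b \is a GRing.unit by have := entry_unit i1 i2; rewrite mxE.
split=> //; first by have := entry_unit i1 i1; rewrite mxE.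
have -> : d / b - c / a = (d - c / a * b) / b by rewrite mulrBl mulrK.
rewrite unitrMr ?unitrV //.
by have := @sq_submx_invertible_schur_unit _ _ i1 i2 i1 i2 A_sub isT isT; rewrite !mxE.
Qed.

Lemma hatmx_inverse_row0 a b c d (B : 'M[R]_3) :
  all_sq_submx_invertible (hatmx a b c d) -> hatmx a b c d *m B = 1%:M ->
  [/\ B i0 i1 = (d - 1)^-1 * (c - d) * B i1 i1,
      B i0 i1 = (c - 1)^-1 * (d - c) * B i2 i1,
      B i0 i2 = (b - 1)^-1 * (a - b) * B i1 i2
    & B i0 i2 = (a - 1)^-1 * (b - a) * B i2 i2].
Proof.
move=> A_sub AB; have [row0 row1 row2] := hatmx_mulmx_offdiag AB.
have [Ua1 Ub1 Uc1 Ud1] := hatmx_subr1_units A_sub.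
split; first exact: sum3_eq0_elim Ud1 (row0 i1 isT) (row2 i1 isT).
- by apply: sum3_eq0_elim Uc1 _ _; rewrite addrAC; [apply: row0 | apply: row2].
- exact: sum3_eq0_elim Ub1 (row0 i2 isT) (row1 i2 isT).
by apply: sum3_eq0_elim Ua1 _ _; rewrite addrAC; [apply: row0 | apply: row1].
Qed.

Lemma hatmx_inverse_col0 a b c d (B : 'M[R]_3) :
  all_sq_submx_invertible (hatmx a b c d) -> hatmx a b c d *m B = 1%:M ->
  B i1 i0 = a^-1 * (c / a - d / b)^-1 * (d / b - 1) * B i0 i0 /\
  B i2 i0 = b^-1 * (d / b - c / a)^-1 * (c / a - 1) * B i0 i0.
Proof.
move=> A_sub AB; have [_ row1 row2] := hatmx_mulmx_offdiag AB.
have [Ua Ub UW] := hatmx_drblock_units A_sub.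
have UW' : c / a - d / b \is a GRing.unit by rewrite -opprB unitrN.
split; first exact: lin3_eq0_elim Ua Ub UW' (row1 i0 isT) (row2 i0 isT).
by apply: lin3_eq0_elim Ub Ua UW _ _; rewrite addrAC; [apply: row1 | apply: row2].
Qed.

End HatMatrices.

Theorem lemma10 (R : unitRingType) (a b c d : R) :
  inShat (hatmx a b c d) ->
  let A' := Phi (hatmx a b c d) in
  [/\ A' i1 i1 = (d - 1)^-1 * (d - c) * a^-1 * (d * b^-1 - c * a^-1)^-1 * (d * b^-1 - 1),
      A' i1 i2 = (c - 1)^-1 * (d - c) * b^-1 * (d * b^-1 - c * a^-1)^-1 * (c * a^-1 - 1),
      A' i2 i1 = (b - 1)^-1 * (b - a) * a^-1 * (d * b^-1 - c * a^-1)^-1 * (d * b^-1 - 1)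
    & A' i2 i2 = (a - 1)^-1 * (b - a) * b^-1 * (d * b^-1 - c * a^-1)^-1 * (c * a^-1 - 1)].
Proof.
move=> [[A_sub _] _] A'; rewrite {}/A' /Phi.
have [AB BA] := minv_spec (sq_submx_invertible_mx A_sub).
have B_unit j k := inverse_entry_unit j k A_sub AB BA.
have [B01E B01E' B02E B02E'] := hatmx_inverse_row0 A_sub AB.
have [B10E B20E] := hatmx_inverse_col0 A_sub AB.
rewrite !J2_LambdaL_entry //; split.
- rewrite B01E mulrK // B10E mulrK // -(opprB d c) -(opprB (d / b)) invrN.
  by rewrite !(mulrN, mulNr) opprK !mulrA.
- by rewrite B01E' mulrK // B20E mulrK // !mulrA.
- rewrite B02E mulrK // B10E mulrK // -(opprB b a) -(opprB (d / b)) invrN.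
  by rewrite !(mulrN, mulNr) opprK !mulrA.
- by rewrite B02E' mulrK // B20E mulrK // !mulrA.
Qed.
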